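(* Let $(G,u,v,\alpha,\beta)$ be a Guvab with $\lim_{k\to\infty}W_k=\frac12$ and $\beta<1$. Then there exists $N$ such that for all $k\ge N$, $$W_k=\frac12\sum_{w\in V(G)}|\xi_k(w)|,$$ where $\xi_k=\mu_k-\nu_k$.
   Context: A Guvab is a tuple $(G,u,v,\alpha,\beta)$ where $G$ is a finite, connected, simple graph, $u,v\in V(G)$, and $\alpha,\beta\in[0,1]$ with $\alpha\le\beta$. A random walk on $G$ with starting vertex $w$ and laziness $\gamma$ is the Markov chain $R_0=w$ and, for $i\ge1$, $R_i=R_{i-1}$ with probability $\gamma$ and $R_i=t$ with probability $\frac{1-\gamma}{\deg(R_{i-1})}$ for each neighbor $t$ of $R_{i-1}$. $\mu_k$ is the distribution after $k$ steps of the walk from $u$ with laziness $\alpha$, $\nu_k$ that of the walk from $v$ with laziness $\beta$, and $W_k=W(\mu_k,\nu_k)$ is the Wasserstein ($L^1$ optimal transport) distance with respect to the graph distance: the minimum over transportation plans (nonnegative $T$ on $V(G)\times V(G)$ with marginals $\mu_k,\nu_k$) of $\sum d(w_1,w_2)T(w_1,w_2)$. *)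

From HB Require Import structures.
From mathcomp Require Import all_boot all_order all_algebra.
From mathcomp Require Import all_classical all_reals all_analysis.
Set Implicit Arguments. Unset Strict Implicit. Unset Printing Implicit Defensive.
Import Order.TTheory GRing.Theory Num.Theory.
Local Open Scope ring_scope.
Local Open Scope classical_set_scope.

Definition simple_graph (T : finType) (e : rel T) : Prop :=
  symmetric e /\ irreflexive e.

Definition connected_graph (T : finType) (e : rel T) : Prop :=
  forall x y : T, connect e x y.

Fixpoint reach (T : finType) (e : rel T) (n : nat) (x : T) : {set T} :=
  match n with
  | 0 => [set x]
  | n'.+1 => reach e n' x :|: [set y | [exists z in reach e n' x, e z y]]
  end.

(* graph distance: least n with y within n steps of x (distances in a
   connected graph on #|T| vertices are < #|T|) *)
Definition gdist (T : finType) (e : rel T) (x y : T) : nat :=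
  find (fun n => y \in reach e n x) (iota 0 #|T|).

Definition deg (T : finType) (e : rel T) (x : T) : nat := #|[set y | e x y]|.

Definition trans (R : realType) (T : finType) (e : rel T) (g : R) (x y : T) : R :=
  if x == y then g else if e x y then (1 - g) / (deg e x)%:R else 0.

Definition step (R : realType) (T : finType) (e : rel T) (g : R) (m : T -> R) : T -> R :=
  fun y => \sum_(x : T) m x * trans e g x y.

Definition walk_dist (R : realType) (T : finType) (e : rel T) (w : T) (g : R)
  (k : nat) : T -> R :=
  iter k (step e g) (fun x => if x == w then 1 else 0).

Definition transport_plan (R : realType) (T : finType) (m n : T -> R)
  (P : T -> T -> R) : Prop :=
  (forall x y, 0 <= P x y) /\
  (forall x, \sum_(y : T) P x y = m x) /\
  (forall y, \sum_(x : T) P x y = n y).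

Definition wasserstein (R : realType) (T : finType) (e : rel T) (m n : T -> R) : R :=
  inf [set c : R | exists P, transport_plan m n P /\
         c = \sum_(x : T) \sum_(y : T) (gdist e x y)%:R * P x y].

Definition Wk (R : realType) (T : finType) (e : rel T) (u v : T) (a b : R)
  (k : nat) : R :=
  wasserstein e (walk_dist e u a k) (walk_dist e v b k).

From HB Require Import structures.
From mathcomp Require Import all_boot all_order all_algebra.
From mathcomp Require Import all_classical all_reals all_analysis.
From mathcomp Require Import lra ring.
Set Implicit Arguments. Unset Strict Implicit. Unset Printing Implicit Defensive.
Import Order.TTheory GRing.Theory Num.Theory.
Import numFieldNormedType.Exports.
Local Open Scope ring_scope.

(* Any two vertices are at distance at most #|V|, so W_k <= #|V| |mu_k - nu_k|_1
   and W_k -> 1/2 forbids the two walks from merging in total variation.  A walk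
   with laziness in (0, 1), and the simple walk on a non-bipartite graph,
   converge to the stationary law pi(w) = deg w / 2|E| (Doeblin: a power of the
   kernel is uniformly positive on its class).  Hence alpha = 0 and the graph is
   bipartite; if also beta = 0, the walks either merge or stay on opposite
   sides, where W_k >= 1.  So beta > 0: nu_k -> pi, while mu_k approaches 2 pi
   restricted to the side occupied at time k.  Near this pair of limits, a plan
   that keeps nu_k in place on that side and sends the rest across single edges,
   along a small perturbation of the uniform flow 1/2|E| per edge, costs exactly
   the total variation distance, which bounds the cost of every plan from below. *)

Lemma reach_mono (T : finType) (r : rel T) x m n :
  (m <= n)%N -> reach r m x \subset reach r n x.
Proof.
move=> /subnK <-; move: (n - m)%N => k; elim: k => [|k IHk] //.
by rewrite addSn; exact: (fintype.subset_trans IHk (finset.subsetUl _ _)).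
Qed.

Lemma reach_last (T : finType) (r : rel T) x p :
  path r x p -> last x p \in reach r (size p) x.
Proof.
elim/last_ind: p => [|p z IHp]; first by rewrite finset.in_set1.
rewrite rcons_path last_rcons size_rcons => /andP[rp rz] /=.
rewrite finset.in_setU finset.inE; apply/orP; right.
by apply/existsP; exists (last x p); rewrite IHp.
Qed.

Lemma connect_reach (T : finType) (r : rel T) x y :
  connect r x y -> y \in reach r #|T| x.
Proof.
move=> /connectP[p rp ->]; have [q rq uq _] := shortenP rp.
have size_q : (size q <= #|T|)%N.
  by have := max_card (mem (x :: q)); rewrite (card_uniqP uq); exact: leq_trans.
exact: fintype.subsetP (reach_mono r x size_q) _ (reach_last rq).
Qed.

Lemma geometric_eventually_lt (R : realType) (z c eps : R) :
  0 <= z < 1 -> 0 < eps -> exists M, forall m, (M <= m)%N -> z ^+ m * c < eps.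
Proof.
move=> /andP[z0 z1] eps0; have c1 : 0 < `|c| + 1 by rewrite ltr_pwDr.
have := @cvg_expr R z; rewrite ger0_norm // => /(_ z1) /cvgr_dist_lt.
case/(_ (eps / (`|c| + 1)) (divr_gt0 eps0 c1)) => M _ HM; exists M => m /HM /=.
rewrite sub0r normrN ger0_norm ?exprn_ge0 // ltr_pdivlMr // => zm_lt.
apply: le_lt_trans zm_lt; apply: ler_wpM2l; first exact: exprn_ge0.
by have := ler_norm c; lra.
Qed.

Lemma sum_ifeq (R : nmodType) (T : finType) (F : T -> R) x :
  \sum_y (if x == y then F y else 0) = F x.
Proof. by rewrite -big_mkcond (big_pred1 x) // => y; rewrite /= eq_sym. Qed.

Lemma ler_sum_term (R : numDomainType) (T : finType) (F : T -> R) x :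
  (forall y, 0 <= F y) -> F x <= \sum_y F y.
Proof. by move=> F_ge0; rewrite (bigD1 x) //= lerDl sumr_ge0. Qed.

(** * Finite stochastic kernels *)

Section Kernel.
Variables (R : realFieldType) (T : finType).
Implicit Types (K : T -> T -> R) (f g : T -> R).

Definition push K f : T -> R := fun y => \sum_x f x * K x y.

Definition l1norm f : R := \sum_x `|f x|.

Definition merging (f g : nat -> T -> R) : Prop :=
  forall eps, 0 < eps -> exists N, forall k, (N <= k)%N ->
    l1norm (fun x => f k x - g k x) < eps.

Lemma l1norm_ge0 f : 0 <= l1norm f.
Proof. exact: sumr_ge0. Qed.

Lemma l1norm_sub_le f g h :
  l1norm (fun x => f x - g x) <= l1norm (fun x => f x - h x) + l1norm (fun x => g x - h x).
Proof.
rewrite /l1norm -big_split /=; apply: ler_sum => x _.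
by rewrite (_ : f x - g x = (f x - h x) - (g x - h x)) ?ler_normB //; ring.
Qed.

Lemma merging_trans (f g h : nat -> T -> R) : merging f h -> merging g h -> merging f g.
Proof.
move=> fh gh eps eps0; have eps2 : 0 < eps / 2 by rewrite divr_gt0.
have [N1 h1] := fh _ eps2; have [N2 h2] := gh _ eps2.
exists (maxn N1 N2) => k; rewrite geq_max => /andP[/h1 ? /h2 ?].
by apply: le_lt_trans (l1norm_sub_le _ _ (h k)) _; lra.
Qed.

Lemma merging_parity (f g : nat -> T -> R) :
  merging (fun j => f j.*2) (fun j => g j.*2) ->
  merging (fun j => f j.*2.+1) (fun j => g j.*2.+1) -> merging f g.
Proof.
move=> fg_even fg_odd eps eps0.
have [N1 h1] := fg_even _ eps0; have [N2 h2] := fg_odd _ eps0.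
exists (maxn N1 N2).*2 => k k_ge; rewrite -[k]odd_double_half.
have : (maxn N1 N2 <= k./2)%N by rewrite -[maxn _ _]doubleK half_leq.
rewrite geq_max => /andP[hk1 hk2].
by case: (odd k); rewrite ?add1n ?add0n; [apply: h2 | apply: h1].
Qed.

Lemma push_sub K f g : push K (fun x => f x - g x) = (fun y => push K f y - push K g y).
Proof. by apply: funext => y; rewrite /push -sumrB; apply: eq_bigr => x _; rewrite mulrBl. Qed.

Lemma push_scale K (c : R) f : push K (fun x => c * f x) = (fun y => c * push K f y).
Proof. by apply: funext => y; rewrite /push mulr_sumr; apply: eq_bigr => x _; rewrite mulrA. Qed.

Lemma iter_push_sub K k f g : iter k (push K) (fun x => f x - g x) =
  (fun y => iter k (push K) f y - iter k (push K) g y).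
Proof. by elim: k => [|k IHk] //; rewrite !iterS IHk push_sub. Qed.

Lemma iter_push_fixed K p k : push K p = p -> iter k (push K) p = p.
Proof. by move=> Kp; elim: k => [|k IHk] //; rewrite iterS IHk Kp. Qed.

Section Stochastic.
Variable K : T -> T -> R.
Hypothesis K_ge0 : forall x y, 0 <= K x y.
Hypothesis K_sum1 : forall x, \sum_y K x y = 1.

Lemma sum_push f : \sum_y push K f y = \sum_x f x.
Proof. by rewrite exchange_big; apply: eq_bigr => x _; rewrite -mulr_sumr K_sum1 mulr1. Qed.

Lemma sum_iter_push k f : \sum_y iter k (push K) f y = \sum_x f x.
Proof. by elim: k => [|k IHk] //; rewrite iterS sum_push. Qed.

Lemma push_ge0 f : (forall x, 0 <= f x) -> forall y, 0 <= push K f y.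
Proof. by move=> f_ge0 y; apply: sumr_ge0 => x _; apply: mulr_ge0. Qed.

Lemma iter_push_ge0 k f : (forall x, 0 <= f x) -> forall y, 0 <= iter k (push K) f y.
Proof. by move=> f_ge0; elim: k => [|k IHk] //; rewrite iterS; apply: push_ge0. Qed.

Lemma l1norm_push_le f : l1norm (push K f) <= l1norm f.
Proof.
apply: (@le_trans _ _ (\sum_y \sum_x `|f x| * K x y)).
  apply: ler_sum => y _; apply: le_trans (ler_norm_sum _ _ _) _.
  by apply: ler_sum => x _; rewrite normrM (ger0_norm (K_ge0 _ _)).
by rewrite exchange_big; apply: ler_sum => x _; rewrite -mulr_sumr K_sum1 mulr1.
Qed.

Lemma l1norm_iter_push_le k f : l1norm (iter k (push K) f) <= l1norm f.
Proof. by elim: k => [|k IHk] //; rewrite iterS; apply: le_trans (l1norm_push_le _) IHk. Qed.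

(* Doeblin's bound: subtracting the uniform minorant [d] on [S] from the
   kernel does not change [push K f], since [f] has zero mass. *)
Lemma l1norm_push_doeblin (S : {set T}) (d : R) f :
  0 <= d -> (forall x y, x \in S -> y \in S -> d <= K x y) ->
  (forall x, x \notin S -> f x = 0) -> \sum_x f x = 0 ->
  l1norm (push K f) <= (1 - d * #|S|%:R) * l1norm f.
Proof.
move=> d0 d_le f_out f_sum0; pose c y := if y \in S then d else 0.
have pushE y : push K f y = \sum_x f x * (K x y - c y).
  under [RHS]eq_bigr do rewrite mulrBr.
  by rewrite sumrB -mulr_suml f_sum0 mul0r subr0.
have normE x y : `|f x| * `|K x y - c y| = `|f x| * (K x y - c y).
  have [xS|xS] := boolP (x \in S); last by rewrite f_out // normr0 !mul0r.
  suff Kc_ge0 : 0 <= K x y - c y by rewrite (ger0_norm Kc_ge0).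
  rewrite subr_ge0 /c; case: ifP => yS; [exact: d_le | exact: K_ge0].
apply: (@le_trans _ _ (\sum_y \sum_x `|f x| * (K x y - c y))).
  apply: ler_sum => y _; rewrite pushE; apply: le_trans (ler_norm_sum _ _ _) _.
  by apply: ler_sum => x _; rewrite normrM normE.
rewrite exchange_big /= mulr_sumr; apply: ler_sum => x _.
rewrite -mulr_sumr sumrB K_sum1 mulrC; apply: ler_wpM2r => //.
by rewrite /c -big_mkcond /= sumr_const mulr_natr.
Qed.

End Stochastic.

Fixpoint kpow K n : T -> T -> R :=
  if n is n'.+1 then fun x y => \sum_z kpow K n' x z * K z y
  else fun x y => (x == y)%:R.

Lemma push_kpow K n f : push (kpow K n) f = iter n (push K) f.
Proof.
elim: n f => [|n IHn] f /=.
  apply: funext => y; rewrite /push (bigD1 y) //= eqxx mulr1 big1 ?addr0 //.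
  by move=> x /negbTE ->; rewrite mulr0.
rewrite -IHn; apply: funext => y; rewrite /push.
under eq_bigr do rewrite mulr_sumr.
rewrite exchange_big /=; apply: eq_bigr => z _.
by rewrite mulr_suml; apply: eq_bigr => x _; rewrite mulrA.
Qed.

Lemma kpow_ge0 K n : (forall x y, 0 <= K x y) -> forall x y, 0 <= kpow K n x y.
Proof.
move=> K_ge0; elim: n => [|n IHn] x y /=; first by rewrite ler0n.
by apply: sumr_ge0 => z _; apply: mulr_ge0.
Qed.

Lemma kpow_sum1 K n : (forall x, \sum_y K x y = 1) -> forall x, \sum_y kpow K n x y = 1.
Proof.
move=> K_sum1; elim: n => [|n IHn] x /=.
  by rewrite (bigD1 x) //= eqxx big1 ?addr0 // => y /negbTE; rewrite eq_sym => ->.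
rewrite exchange_big /= -[RHS](IHn x); apply: eq_bigr => z _.
by rewrite -mulr_sumr K_sum1 mulr1.
Qed.

Lemma kpowS_ge K n x z y : (forall x y, 0 <= K x y) ->
  kpow K n x z * K z y <= kpow K n.+1 x y.
Proof.
move=> K_ge0; rewrite /= (bigD1 z) //= lerDl.
by apply: sumr_ge0 => i _; apply: mulr_ge0 => //; apply: kpow_ge0.
Qed.

Lemma kpow_gt0 K n x y : (forall x y, 0 <= K x y) -> (forall z, 0 < K z z) ->
  y \in reach (fun a b => 0 < K a b) n x -> 0 < kpow K n x y.
Proof.
move=> K_ge0 K_diag; elim: n y => [|n IHn] y /=.
  by rewrite finset.in_set1 => /eqP ->; rewrite eqxx ltr01.
rewrite finset.in_setU finset.inE => /orP[/IHn xy | /existsP[z /andP[/IHn xz zy]]].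
  by apply: lt_le_trans (kpowS_ge n x y y K_ge0); rewrite mulr_gt0.
by apply: lt_le_trans (kpowS_ge n x z y K_ge0); rewrite mulr_gt0.
Qed.

End Kernel.

(** * Doeblin's convergence theorem *)

Section Ergodic.
Variables (R : realType) (T : finType) (K : T -> T -> R).
Hypothesis K_ge0 : forall x y, 0 <= K x y.
Hypothesis K_sum1 : forall x, \sum_y K x y = 1.
Hypothesis K_diag : forall z, 0 < K z z.
Variables (S : {set T}) (x0 : T).
Hypothesis x0S : x0 \in S.
Hypothesis S_closed : forall x y, x \in S -> y \notin S -> K x y = 0.
Hypothesis S_irreducible :
  forall x y, x \in S -> y \in S -> connect (fun a b => 0 < K a b) x y.

Lemma iter_push_out k f : (forall x, x \notin S -> f x = 0) ->
  forall x, x \notin S -> iter k (push K) f x = 0.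
Proof.
move=> f_out; elim: k => [|k IHk] x xS //=; first exact: f_out.
rewrite /push big1 // => z _; have [zS|zS] := boolP (z \in S).
  by rewrite S_closed // mulr0.
by rewrite IHk // mul0r.
Qed.

Lemma kpow_unif_lbound :
  exists2 d : R, 0 < d & forall x y, x \in S -> y \in S -> d <= kpow K #|T| x y.
Proof.
pose P q := (q.1 \in S) && (q.2 \in S).
exists (\big[Num.min/1]_(q : T * T | P q) kpow K #|T| q.1 q.2).
  apply: lt_bigmin => // -[x y] /andP[/= xS yS].
  exact/kpow_gt0/connect_reach/S_irreducible.
by move=> x y xS yS; apply: (@bigmin_le_cond _ _ _ _ (x, y) P); rewrite /P xS yS.
Qed.

Lemma iter_push_contract : exists2 rho : R, 0 <= rho < 1 &
  forall f, (forall x, x \notin S -> f x = 0) -> \sum_x f x = 0 ->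
  forall j m, l1norm (iter (j * #|T| + m) (push K) f) <= rho ^+ j * l1norm f.
Proof.
have [d d0 d_le] := kpow_unif_lbound.
have rho_ge0 : 0 <= 1 - d * #|S|%:R.
  rewrite subr_ge0; apply: (@le_trans _ _ (\sum_(y in S) kpow K #|T| x0 y)).
    by rewrite mulr_natr -sumr_const; apply: ler_sum => y yS; apply: d_le.
  rewrite -[X in _ <= X](kpow_sum1 #|T| K_sum1 x0) [X in _ <= X](bigID (mem S)) /= lerDl.
  by apply: sumr_ge0 => y _; apply: kpow_ge0.
have rho_lt1 : 1 - d * #|S|%:R < 1.
  by rewrite ltrBlDr ltrDl mulr_gt0 // ltr0n; apply/card_gt0P; exists x0.
exists (1 - d * #|S|%:R); first by rewrite rho_ge0.
move=> f f_out f_sum0 j m; elim: j => [|j IHj].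
  by rewrite mul0n add0n expr0 mul1r l1norm_iter_push_le.
rewrite mulSn -addnA iterD -push_kpow exprS -mulrA.
apply: le_trans (l1norm_push_doeblin _ _ (ltW d0) d_le _ _) (ler_wpM2l rho_ge0 IHj).
- exact: kpow_ge0.
- exact: kpow_sum1.
- exact: iter_push_out.
- by rewrite sum_iter_push.
Qed.

Lemma iter_push_merging (p mu : T -> R) : push K p = p ->
  (forall x, x \notin S -> p x = 0) -> (forall x, x \notin S -> mu x = 0) ->
  \sum_x p x = 1 -> \sum_x mu x = 1 ->
  merging (fun k => iter k (push K) mu) (fun=> p).
Proof.
move=> Kp p_out mu_out p_sum1 mu_sum1 eps eps0.
pose h x := mu x - p x.
have iterE k : (fun y => iter k (push K) mu y - p y) = iter k (push K) h.
  by rewrite iter_push_sub (iter_push_fixed k Kp).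
have h_out x : x \notin S -> h x = 0 by move=> xS; rewrite /h mu_out ?p_out ?subr0.
have h_sum0 : \sum_x h x = 0 by rewrite sumrB mu_sum1 p_sum1 subrr.
have [rho rho01 contract] := iter_push_contract.
have [M HM] := geometric_eventually_lt (l1norm h) rho01 eps0.
exists (M * #|T|)%N => k k_ge; rewrite iterE (divn_eq k #|T|).
apply: le_lt_trans (contract _ h_out h_sum0 _ _) (HM _ _).
by rewrite leq_divRL //; apply/card_gt0P; exists x0.
Qed.
End Ergodic.

(** * Two-step connectivity and bipartitions *)

Lemma deg_gt0_connected (T : finType) (e : rel T) (x y : T) :
  connected_graph e -> x != y -> forall z, (0 < deg e z)%N.
Proof.
move=> e_conn x_neq_y z.
have [t z_neq_t] : exists t, z != t.
  by have [->|] := eqVneq z x; [exists y | exists x].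
have /connectP[[|t' p] /= zp t_last] := e_conn z t; first by rewrite t_last eqxx in z_neq_t.
by apply/card_gt0P; exists t'; apply: mem_set; case/andP: zp.
Qed.

Section TwoStepConnectivity.
Variables (T : finType) (e : rel T).
Hypothesis e_sym : symmetric e.
Hypothesis deg_gt0 : forall x, (0 < deg e x)%N.

Lemma neighbor_exists x : exists y, e x y.
Proof. by have /card_gt0P[y /set_mem xy] := deg_gt0 x; exists y. Qed.

Definition adj2 : rel T := fun x y => [exists z, e x z && e z y].

Lemma adj2_sym : symmetric adj2.
Proof.
by move=> x y; apply/existsP/existsP => -[z /andP[xz zy]]; exists z; rewrite e_sym zy e_sym xz.
Qed.

Lemma connect_adj2_edge x x' y y' :
  connect adj2 x x' -> e x y -> e x' y' -> connect adj2 y y'.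
Proof.
move=> /connectP[p]; elim: p x y => [|z p IHp] x y /=.
  by move=> _ -> xy xy'; apply: connect1; apply/existsP; exists x; rewrite e_sym xy xy'.
move=> /andP[xz zp] last_p xy x'y'; have /existsP[t /andP[xt tz]] := xz.
apply: (@connect_trans _ _ t); last by apply: IHp zp last_p _ x'y'; rewrite e_sym.
by apply: connect1; apply/existsP; exists x; rewrite e_sym xy xt.
Qed.

Lemma connect_adj2_cover u y0 : connected_graph e -> e u y0 ->
  forall z, connect adj2 u z || connect adj2 y0 z.
Proof.
move=> e_conn uy0 z; have /connectP[p] := e_conn u z.
elim/last_ind: p z => [|p t IHp] z; first by move=> _ ->; rewrite connect0.
rewrite rcons_path last_rcons => /andP[up pt] ->.
have /orP[ut|y0t] := IHp _ up erefl.
  by rewrite (connect_adj2_edge ut uy0 pt) orbT.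
by rewrite (connect_adj2_edge y0t _ pt) // e_sym.
Qed.

Definition bipartition (A : {set T}) := forall x y, e x y -> (x \in A) = (y \notin A).

Definition side (A : {set T}) k : {set T} := if odd k then ~: A else A.

Lemma bipartitionC A : bipartition A -> bipartition (~: A).
Proof. by move=> A_bip x y xy; rewrite !finset.in_setC (A_bip _ _ xy). Qed.

Lemma bipartition_side A k : bipartition A -> bipartition (side A k).
Proof. by rewrite /side; case: (odd k) => // /bipartitionC. Qed.

(* The [adj2]-class of [u] is one side of a bipartition unless it contains a
   neighbor of [u]. *)
Lemma adj2_connected_or_bipartite u : connected_graph e ->
  (forall x y, connect adj2 x y) \/
  exists A : {set T}, [/\ u \in A, bipartition A,
    forall x y, x \in A -> y \in A -> connect adj2 x y &
    forall x y, x \notin A -> y \notin A -> connect adj2 x y].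
Proof.
move=> e_conn; have [y0 uy0] := neighbor_exists u.
have adj2_csym := sym_connect_sym adj2_sym.
have cover := connect_adj2_cover e_conn uy0.
have [y0u|y0u] := boolP (connect adj2 y0 u).
  left=> x y; have u_conn z : connect adj2 u z.
    by have /orP[//|y0z] := cover z; rewrite (connect_trans _ y0z) // adj2_csym.
  by rewrite (connect_trans _ (u_conn y)) // adj2_csym.
right; exists [set z | connect adj2 u z]; split.
- by rewrite finset.inE connect0.
- move=> x y xy; rewrite !finset.inE.
  have [ux|ux] := boolP (connect adj2 u x).
    apply/esym/negP => uy; apply/negP: y0u.
    by rewrite (connect_trans (connect_adj2_edge ux uy0 xy)) // adj2_csym.
  have y0x : connect adj2 y0 x by move: (cover x); rewrite (negbTE ux).
  by rewrite (connect_adj2_edge y0x _ xy) // e_sym.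
- by move=> x y; rewrite !finset.inE => ux uy; rewrite (connect_trans _ uy) // adj2_csym.
- move=> x y; rewrite !finset.inE => ux uy.
  have y0x : connect adj2 y0 x by move: (cover x); rewrite (negbTE ux).
  have y0y : connect adj2 y0 y by move: (cover y); rewrite (negbTE uy).
  by rewrite (connect_trans _ y0y) // adj2_csym.
Qed.

End TwoStepConnectivity.

(** * Lazy random walks *)

Section Walks.
Variables (R : realType) (T : finType) (e : rel T).
Hypothesis e_sym : symmetric e.
Hypothesis e_irr : irreflexive e.
Hypothesis deg_gt0 : forall x, (0 < deg e x)%N.

Lemma degE x : (deg e x)%:R = \sum_y (if e x y then 1 else 0 : R).
Proof.
rewrite /deg -sum1_card natr_sum big_mkcond /=; apply: eq_bigr => y _.
by have [xy|/negP xy] := boolP (e x y); [rewrite mem_set | rewrite memNset].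
Qed.

Lemma sum_edge_const (c : R) x : \sum_y (if e x y then c else 0) = c * (deg e x)%:R.
Proof. by rewrite degE mulr_sumr; apply: eq_bigr => y _; case: ifP; rewrite ?mulr1 ?mulr0. Qed.

Lemma deg_neq0 x : (deg e x)%:R != 0 :> R.
Proof. by rewrite pnatr_eq0 -lt0n. Qed.

Lemma transE (g : R) x y : trans e g x y =
  (if x == y then g else 0) + (if e x y then (1 - g) / (deg e x)%:R else 0).
Proof. by rewrite /trans; case: eqVneq => [<-|_]; rewrite ?e_irr ?addr0 ?add0r. Qed.

Lemma trans_sum1 (g : R) x : \sum_y trans e g x y = 1.
Proof.
under eq_bigr do rewrite transE.
rewrite big_split /= (sum_ifeq (fun=> g)).
by rewrite sum_edge_const divfK ?deg_neq0 // addrC subrK.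
Qed.

Lemma trans_ge0 (g : R) x y : 0 <= g <= 1 -> 0 <= trans e g x y.
Proof.
move=> /andP[g0 g1]; rewrite /trans; case: ifP => // _; case: ifP => // _.
by rewrite divr_ge0 ?ler0n ?subr_ge0.
Qed.

Lemma trans_edge_gt0 (g : R) x y : g < 1 -> e x y -> 0 < trans e g x y.
Proof.
move=> g1 xy; rewrite /trans; case: eqVneq => [eq_xy|_]; first by rewrite eq_xy e_irr in xy.
by rewrite xy divr_gt0 ?ltr0n ?subr_gt0.
Qed.

Lemma trans0_edge x y : trans e (0 : R) x y != 0 -> e x y.
Proof. by rewrite /trans; case: ifP => _; [rewrite eqxx | case: (e x y); rewrite ?eqxx]. Qed.

Definition point_mass (w : T) : T -> R := fun x => if x == w then 1 else 0.

Lemma point_mass_sum1 w : \sum_x point_mass w x = 1.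
Proof. by rewrite -big_mkcond big_pred1_eq. Qed.

Lemma walk_distE w (g : R) k : walk_dist e w g k = iter k (push (trans e g)) (point_mass w).
Proof. by []. Qed.

Lemma walk_dist_ge0 w (g : R) k x : 0 <= g <= 1 -> 0 <= walk_dist e w g k x.
Proof.
move=> g01; apply: iter_push_ge0 => [y z|y]; first exact: trans_ge0.
by rewrite /point_mass; case: ifP.
Qed.

Lemma walk_dist_sum1 w (g : R) k : \sum_x walk_dist e w g k x = 1.
Proof. by rewrite walk_distE sum_iter_push ?point_mass_sum1 //; apply: trans_sum1. Qed.

(* [vol] is twice the number of edges. *)
Definition vol : R := \sum_x (deg e x)%:R.
Definition stat x : R := (deg e x)%:R / vol.

Lemma vol_gt0 : T -> 0 < vol.
Proof.
move=> x0; rewrite /vol (bigD1 x0) //= ltr_wpDr ?ltr0n //.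
by apply: sumr_ge0 => x _; apply: ler0n.
Qed.

Lemma stat_sum1 : T -> \sum_x stat x = 1.
Proof. by move=> x0; rewrite -mulr_suml divff // gt_eqF // vol_gt0. Qed.

Lemma push_trans_stat (g : R) : push (trans e g) stat = stat.
Proof.
apply: funext => y; rewrite /push.
under eq_bigr do rewrite transE mulrDr.
rewrite big_split /=.
have -> : \sum_x stat x * (if x == y then g else 0) = stat y * g.
  by rewrite (bigD1 y) //= eqxx big1 ?addr0 // => x /negbTE ->; rewrite mulr0.
have -> : \sum_x stat x * (if e x y then (1 - g) / (deg e x)%:R else 0) =
    (1 - g) / vol * (deg e y)%:R.
  rewrite degE mulr_sumr; apply: eq_bigr => x _; rewrite e_sym; case: (e y x); rewrite ?mulr0 //.
  by rewrite /stat mulr1; field; rewrite deg_neq0 gt_eqF ?vol_gt0.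
have vol_neq0 : vol != 0 by rewrite gt_eqF // vol_gt0.
by rewrite /stat; field.
Qed.

Lemma lazy_walk_merging (g : R) w : 0 < g < 1 -> connected_graph e ->
  merging (walk_dist e w g) (fun=> stat).
Proof.
move=> /andP[g0 g1] e_conn.
have g01 : 0 <= g <= 1 by rewrite !ltW.
have K_diag z : 0 < trans e g z z by rewrite /trans eqxx.
apply: (iter_push_merging (fun x y => trans_ge0 x y g01) (trans_sum1 g) K_diag
  (finset.in_setT w)).
- by move=> x y _; rewrite finset.in_setT.
- move=> x y _ _; apply: (connect_sub _ (e_conn x y)) => a b ab.
  exact/connect1/trans_edge_gt0.
- exact: push_trans_stat.
- by move=> x; rewrite finset.in_setT.
- by move=> x; rewrite finset.in_setT.
- exact: stat_sum1.
- exact: point_mass_sum1.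
Qed.

Definition trans2 : T -> T -> R := kpow (trans e 0) 2.

Lemma trans0_ge0 x y : 0 <= trans e (0 : R) x y.
Proof. by apply: trans_ge0; rewrite lexx ler01. Qed.

Lemma trans2E x y : trans2 x y = \sum_z trans e 0 x z * trans e 0 z y.
Proof.
rewrite /trans2 /=; apply: eq_bigr => z _; congr (_ * _).
rewrite (bigD1 x) //= eqxx mul1r big1 ?addr0 // => t.
by rewrite eq_sym => /negbTE ->; rewrite mul0r.
Qed.

Lemma trans2_gt0 x z y : e x z -> e z y -> 0 < trans2 x y.
Proof.
move=> xz zy; rewrite trans2E (bigD1 z) //= ltr_wpDr ?mulr_gt0 ?trans_edge_gt0 //.
by apply: sumr_ge0 => t _; rewrite mulr_ge0 ?trans0_ge0.
Qed.

Lemma trans2_adj2 x y : trans2 x y != 0 -> adj2 e x y.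
Proof.
apply: contraR => /existsPn adj2_n; rewrite trans2E big1 // => z _.
have /nandP[] := adj2_n z => [xz|zy].
  by rewrite (contraNeq (@trans0_edge x z) xz) mul0r.
by rewrite (contraNeq (@trans0_edge z y) zy) mulr0.
Qed.

Lemma iter_push_double j f :
  iter j.*2 (push (trans e 0)) f = iter j (push trans2) f.
Proof. by elim: j => [|j IHj] //; rewrite doubleS !iterS IHj /trans2 push_kpow. Qed.

Lemma iter_push_doubleS j f :
  iter j.*2.+1 (push (trans e 0)) f = iter j (push trans2) (push (trans e 0) f).
Proof. by rewrite iterSr iter_push_double. Qed.

Lemma iter_push_trans2_merging (S : {set T}) (p mu : T -> R) x0 :
  (forall x y, x \in S -> y \notin S -> trans2 x y = 0) ->
  (forall x y, x \in S -> y \in S -> connect (adj2 e) x y) -> x0 \in S ->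
  push trans2 p = p -> (forall x, x \notin S -> p x = 0) ->
  (forall x, x \notin S -> mu x = 0) -> \sum_x p x = 1 -> \sum_x mu x = 1 ->
  merging (fun j => iter j (push trans2) mu) (fun=> p).
Proof.
move=> S_closed S_conn x0S; apply: (iter_push_merging _ _ _ x0S S_closed).
- exact: kpow_ge0 trans0_ge0.
- exact: kpow_sum1 (trans_sum1 0).
- by move=> z; have [y zy] := neighbor_exists deg_gt0 z; apply: (trans2_gt0 zy); rewrite e_sym.
- move=> x y xS yS; apply: (connect_sub _ (S_conn x y xS yS)) => a b /existsP[z /andP[az zb]].
  exact/connect1/(trans2_gt0 az zb).
Qed.

Lemma simple_walk_merging w : (forall x y, connect (adj2 e) x y) ->
  merging (walk_dist e w 0) (fun=> stat).
Proof.
move=> adj2_conn.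
have stat2 : push trans2 stat = stat by rewrite /trans2 push_kpow /= !push_trans_stat.
have cvg_from mu : \sum_x mu x = 1 -> merging (fun j => iter j (push trans2) mu) (fun=> stat).
  move=> mu_sum1; apply: (iter_push_trans2_merging (S := [set: T]) _ _ (finset.in_setT w)) => //.
  - by move=> x y _; rewrite finset.in_setT.
  - by move=> x; rewrite finset.in_setT.
  - by move=> x; rewrite finset.in_setT.
  - exact: stat_sum1.
apply: merging_parity => eps eps0.
  have [N HN] := cvg_from _ (point_mass_sum1 w) _ eps0.
  by exists N => j /HN; rewrite walk_distE iter_push_double.
have [N HN] := cvg_from _ (walk_dist_sum1 w 0 1) _ eps0.
by exists N => j; rewrite walk_distE iter_push_doubleS; apply: HN.
Qed.

Lemma walk_merging_stat (g : R) w : 0 <= g < 1 ->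
  connected_graph e -> (forall x y, connect (adj2 e) x y) ->
  merging (walk_dist e w g) (fun=> stat).
Proof.
move=> /andP[g0 g1] e_conn adj2_conn; have [<-|g_neq0] := eqVneq 0 g.
  exact: simple_walk_merging.
by apply: lazy_walk_merging => //; rewrite lt_def eq_sym g_neq0 g0.
Qed.

Definition stat_on (A : {set T}) x : R := if x \in A then stat x else 0.

Lemma push_trans0_out A (f : T -> R) : bipartition e A -> (forall x, x \notin A -> f x = 0) ->
  forall y, y \in A -> push (trans e 0) f y = 0.
Proof.
move=> A_bip f_out y yA; rewrite /push big1 // => x _.
have [xA|/f_out->] := boolP (x \in A); last by rewrite mul0r.
suff -> : trans e (0 : R) x y = 0 by rewrite mulr0.
by apply/eqP; apply: contraTT yA => /trans0_edge xy; rewrite -(A_bip _ _ xy) xA.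
Qed.

Lemma simple_walk_out A w k : bipartition e A -> w \in A ->
  forall x, x \notin side A k -> walk_dist e w (0 : R) k x = 0.
Proof.
move=> A_bip wA; elim: k => [|k IHk] x /=.
  by rewrite /side /= /point_mass; case: eqP => // ->; rewrite wA.
move=> x_out; apply: (push_trans0_out (bipartition_side k A_bip)) => //.
by move: x_out; rewrite /side /=; case: (odd k); rewrite /= ?finset.in_setC ?negbK.
Qed.

Lemma push_stat_on A : bipartition e A -> push (trans e 0) (stat_on A) = stat_on (~: A).
Proof.
move=> A_bip; apply: funext => y; rewrite {2}/stat_on finset.in_setC.
have [yA|yA] /= := boolP (y \in A).
  by apply: (push_trans0_out A_bip) => // x xA; rewrite /stat_on (negbTE xA).
rewrite -[RHS](congr1 (fun f => f y) (push_trans_stat 0)); apply: eq_bigr => x _.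
rewrite /stat_on; have [xA|xA] // := boolP (x \in A).
suff -> : trans e (0 : R) x y = 0 by rewrite !mulr0.
by apply/eqP; apply: contraTT xA => /trans0_edge xy; rewrite (A_bip _ _ xy) yA.
Qed.

Lemma sum_stat_on A : T -> bipartition e A -> \sum_x stat_on A x = 1 / 2.
Proof.
move=> x0 A_bip.
have sumC : \sum_x stat_on (~: A) x = \sum_x stat_on A x.
  by rewrite -(push_stat_on A_bip) sum_push //; apply: trans_sum1.
have : \sum_x stat_on A x + \sum_x stat_on (~: A) x = 1.
  rewrite -big_split -(stat_sum1 x0); apply: eq_bigr => x _.
  by rewrite /stat_on finset.in_setC; case: (x \in A); rewrite /= ?addr0 ?add0r.
by rewrite sumC; lra.
Qed.

Lemma trans2_out A x y : bipartition e A -> x \in A -> y \notin A -> trans2 x y = 0.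
Proof.
move=> A_bip xA yA; apply/eqP; apply: contraNT yA => /trans2_adj2 /existsP[z /andP[xz zy]].
by rewrite -[y \in A]negbK -(A_bip _ _ zy) -(A_bip _ _ xz).
Qed.

Lemma iter_push_trans2_bipartite A (mu : T -> R) x0 : bipartition e A ->
  (forall x y, x \in A -> y \in A -> connect (adj2 e) x y) -> x0 \in A ->
  (forall x, x \notin A -> mu x = 0) -> \sum_x mu x = 1 ->
  merging (fun j => iter j (push trans2) mu) (fun=> fun x => 2 * stat_on A x).
Proof.
move=> A_bip A_conn x0A mu_out mu_sum1.
apply: (iter_push_trans2_merging (fun x y => @trans2_out A x y A_bip) A_conn x0A) => //.
- rewrite /trans2 push_kpow /= !push_scale push_stat_on // push_stat_on ?finset.setCK //.
  exact: bipartitionC.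
- by move=> x xA; rewrite /stat_on (negbTE xA) mulr0.
- by rewrite -mulr_sumr sum_stat_on //; lra.
Qed.

Lemma simple_walk_merging_bipartite A w : bipartition e A ->
  (forall x y, x \in A -> y \in A -> connect (adj2 e) x y) ->
  (forall x y, x \notin A -> y \notin A -> connect (adj2 e) x y) -> w \in A ->
  merging (walk_dist e w 0) (fun k x => 2 * stat_on (side A k) x).
Proof.
move=> A_bip A_conn Ac_conn wA.
have [y wy] := neighbor_exists deg_gt0 w.
have yAc : y \in ~: A by rewrite finset.in_setC -(A_bip _ _ wy).
have Ac_conn' x z : x \in ~: A -> z \in ~: A -> connect (adj2 e) x z.
  by rewrite !finset.in_setC; apply: Ac_conn.
have out0 := simple_walk_out (k := 0) A_bip wA.
have out1 := simple_walk_out (k := 1) A_bip wA.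
apply: merging_parity => eps eps0.
  have [N HN] := iter_push_trans2_bipartite A_bip A_conn wA out0 (walk_dist_sum1 w 0 0) eps0.
  by exists N => j; rewrite walk_distE iter_push_double /side odd_double; apply: HN.
have [N HN] := iter_push_trans2_bipartite (bipartitionC A_bip) Ac_conn' yAc out1
  (walk_dist_sum1 w 0 1) eps0.
by exists N => j; rewrite walk_distE iter_push_doubleS /side /= odd_double; apply: HN.
Qed.

End Walks.

(** * Transport plans *)

Section Transport.
Variables (R : realType) (T : finType) (e : rel T).
Implicit Types (m n : T -> R) (P : T -> T -> R).

Lemma gdist_le_card x y : (gdist e x y <= #|T|)%N.
Proof. by rewrite /gdist (leq_trans (find_size _ _)) // size_iota. Qed.

Lemma gdistxx x : gdist e x x = 0%N.
Proof.
rewrite /gdist; have : (0 < #|T|)%N by apply/card_gt0P; exists x.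
by case: #|T| => // n _ /=; rewrite finset.in_set1 eqxx.
Qed.

Lemma gdist_gt0 x y : x != y -> (0 < gdist e x y)%N.
Proof.
move=> xy; rewrite /gdist; have : (0 < #|T|)%N by apply/card_gt0P; exists x.
by case: #|T| => // n _ /=; rewrite finset.in_set1 eq_sym (negbTE xy).
Qed.

Lemma gdist_edge_le1 x y : e x y -> (gdist e x y <= 1)%N.
Proof.
move=> xy; rewrite /gdist; case: #|T| => [|[|n]] //=; first by case: ifP.
case: ifP => // _; case: ifP => // /negP[]; rewrite /= finset.in_setU; apply/orP; right.
by rewrite finset.inE; apply/existsP; exists x; rewrite finset.in_set1 eqxx xy.
Qed.

Definition cost P : R := \sum_x \sum_y (gdist e x y)%:R * P x y.

Lemma wasserstein_le_cost m n P : transport_plan m n P -> wasserstein e m n <= cost P.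
Proof.
move=> plan_P; apply: ge_inf; last by exists P.
exists 0 => c [Q [[Q_ge0 _] ->]].
by apply: sumr_ge0 => x _; apply: sumr_ge0 => y _; rewrite mulr_ge0.
Qed.

Lemma wasserstein_ge m n (c : R) : (exists P, transport_plan m n P) ->
  (forall P, transport_plan m n P -> c <= cost P) -> c <= wasserstein e m n.
Proof.
move=> [P plan_P] c_le; apply: lb_le_inf; first by exists (cost P), P.
by move=> _ [Q [plan_Q ->]]; apply: c_le.
Qed.

Lemma transport_plan_sum m n P : transport_plan m n P -> \sum_x m x = \sum_x n x.
Proof.
case=> _ [rows cols]; rewrite -(eq_bigr _ (fun x _ => rows x)) exchange_big /=.
by apply: eq_bigr => y _; rewrite cols.
Qed.

Lemma transport_plan_prod m n : (forall x, 0 <= m x) -> (forall x, 0 <= n x) ->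
  \sum_x m x = 1 -> \sum_x n x = 1 -> transport_plan m n (fun x y => m x * n y).
Proof.
move=> m_ge0 n_ge0 m_sum1 n_sum1; split; first by move=> x y; rewrite mulr_ge0.
by split=> [x|y]; rewrite -?mulr_sumr -?mulr_suml ?n_sum1 ?m_sum1 ?mulr1 ?mul1r.
Qed.

(* Every unit of mass that leaves its vertex travels distance at least one. *)
Lemma tv_le_cost m n P : transport_plan m n P -> 1 / 2 * \sum_x `|m x - n x| <= cost P.
Proof.
move=> plan_P; have mn_sum := transport_plan_sum plan_P; case: plan_P => [P_ge0 [rows cols]].
have row_le x : (`|m x - n x| + (m x - n x)) / 2 <= \sum_y (gdist e x y)%:R * P x y.
  have Pm : P x x <= m x by rewrite -rows (ler_sum_term x (P_ge0 x)).
  have Pn : P x x <= n x by rewrite -cols (ler_sum_term (F := P^~ x) x (P_ge0^~ x)).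
  rewrite (bigD1 x) //= gdistxx mul0r add0r.
  apply: (@le_trans _ _ (\sum_(y | y != x) P x y)).
    by move: (rows x); rewrite (bigD1 x) //=; case: (lerP (n x) (m x)) => _; lra.
  by apply: ler_sum => y yx; rewrite ler_peMl // (ler_nat R 1) gdist_gt0 // eq_sym.
apply: le_trans (ler_sum _ (fun x _ => row_le x)).
by rewrite -mulr_suml big_split /= sumrB mn_sum subrr addr0; lra.
Qed.

Lemma wasserstein_card1 m n (u : T) : (forall y, y = u) -> wasserstein e m n = 0.
Proof.
move=> T1; have cost0 Q : cost Q = 0.
  by rewrite /cost big1 // => x _; rewrite big1 // => y _; rewrite (T1 x) (T1 y) gdistxx mul0r.
have [[P plan_P]|no_plan] := pselect (exists P, transport_plan m n P).
  apply/eqP; rewrite eq_le -(cost0 P) wasserstein_le_cost //=.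
  by apply: wasserstein_ge => [|Q _]; [exists P | rewrite !cost0].
by rewrite /wasserstein inf_out // => -[[c [Q [plan_Q _]]] _]; apply: no_plan; exists Q.
Qed.

(* The plan keeps [min (m x) (n x)] in place and spreads the excesses [a]
   and [b] as a product; [s / s] is [1] unless there is nothing to move. *)
Lemma wasserstein_le_l1norm m n : (forall x, 0 <= m x) -> (forall x, 0 <= n x) ->
  \sum_x m x = \sum_x n x -> wasserstein e m n <= #|T|%:R * l1norm (fun x => m x - n x).
Proof.
move=> m_ge0 n_ge0 mn_sum.
pose c x := Num.min (m x) (n x); pose a x := m x - c x; pose b x := n x - c x.
have a_ge0 x : 0 <= a x by rewrite subr_ge0 ge_min lexx.
have b_ge0 x : 0 <= b x by rewrite subr_ge0 ge_min lexx orbT.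
pose s := \sum_x a x.
have b_sum : \sum_x b x = s by rewrite /s !sumrB mn_sum.
have s_ge0 : 0 <= s by apply: sumr_ge0.
have unit_s (F : T -> R) :
    (forall x, 0 <= F x) -> \sum_x F x = s -> forall x, F x * (s / s) = F x.
  move=> F_ge0 F_sum x; have [s0|s_neq0] := eqVneq s 0; last by rewrite divff ?mulr1.
  by rewrite (psumr_eq0P (fun y _ => F_ge0 y) (etrans F_sum s0)) ?mul0r.
pose P x y := (if x == y then c x else 0) + a x * b y / s.
have plan_P : transport_plan m n P.
  split=> [x y|].
    by rewrite /P addr_ge0 ?divr_ge0 ?mulr_ge0 //; case: eqP; rewrite // /c le_min m_ge0 n_ge0.
  split=> [x|y]; rewrite /P big_split /=.
    rewrite sum_ifeq -mulr_suml -mulr_sumr b_sum -mulrA (unit_s a) // /a; lra.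
  rewrite (eq_bigr (fun x => if x == y then c y else 0)); last by move=> x _; case: eqP => [->|].
  rewrite -big_mkcond big_pred1_eq.
  under eq_bigr do rewrite mulrAC.
  by rewrite -!mulr_suml -/s mulrC (unit_s b) // /b; lra.
apply: le_trans (wasserstein_le_cost plan_P) _.
apply: (@le_trans _ _ (\sum_x \sum_y #|T|%:R * (a x * b y / s))).
  apply: ler_sum => x _; apply: ler_sum => y _; rewrite /P.
  have [<-|_] := eqVneq x y; first by rewrite gdistxx mul0r mulr_ge0 ?divr_ge0 ?mulr_ge0.
  by rewrite add0r ler_wpM2r ?divr_ge0 ?mulr_ge0 // ler_nat gdist_le_card.
under eq_bigr do rewrite -mulr_sumr.
rewrite -mulr_sumr ler_wpM2l //.
under eq_bigr do rewrite -mulr_suml -mulr_sumr b_sum -mulrA (unit_s a) //.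
rewrite /l1norm; apply: ler_sum => x _; rewrite /a /c; case: (lerP (m x) (n x)) => mn; lra.
Qed.

Lemma wasserstein_edge_plan m n P : transport_plan m n P ->
  (forall x y, x != y -> ~~ e x y -> P x y = 0) ->
  (forall x, P x x = Num.min (m x) (n x)) ->
  wasserstein e m n = 1 / 2 * \sum_x `|m x - n x|.
Proof.
move=> plan_P P_edge P_diag; have mn_sum := transport_plan_sum plan_P.
case: (plan_P) => [P_ge0 [rows _]].
apply/eqP; rewrite eq_le; apply/andP; split; last first.
  by apply: wasserstein_ge => [|Q /tv_le_cost //]; exists P.
apply: le_trans (wasserstein_le_cost plan_P) _.
have costE : cost P = \sum_x (m x - Num.min (m x) (n x)).
  apply: eq_bigr => x _; rewrite -P_diag -rows (bigD1 x) //= gdistxx mul0r add0r.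
  rewrite [X in _ = X - _](bigD1 x) //= addrC addrK; apply: eq_bigr => y yx.
  have [xy|xy] := boolP (e x y); last by rewrite P_edge ?mulr0 // eq_sym.
  suff -> : gdist e x y = 1%N by rewrite mul1r.
  by apply/eqP; rewrite eqn_leq gdist_edge_le1 // gdist_gt0 // eq_sym.
rewrite costE (eq_bigr (fun x => (`|m x - n x| + (m x - n x)) / 2)); last first.
  by move=> x _; case: (lerP (m x) (n x)) => _; lra.
by rewrite -mulr_suml big_split /= sumrB mn_sum subrr addr0; lra.
Qed.

End Transport.

(** * Flows and the plan near the limits *)

Section Flow.
Variables (R : realType) (T : finType) (e : rel T).
Hypothesis e_sym : symmetric e.

Definition is_flow (g : T -> T -> R) (s : T -> R) :=
  [/\ forall x y, g x y = - g y x, forall x y, ~~ e x y -> g x y = 0 &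
      forall x, \sum_y g x y = s x].

Lemma path_flow z r : connect e z r ->
  exists g, is_flow g (fun x => point_mass R z x - point_mass R r x).
Proof.
move=> /connectP[p]; elim: p z => [|z' p IHp] z /= => [_ ->|/andP[zz' z'p] last_p].
  by exists (fun _ _ => 0); split=> [x y|//|x]; rewrite ?oppr0 // big1 // subrr.
have [g [g_anti g_edge g_div]] := IHp z' z'p last_p.
pose d (a b x y : T) := point_mass R a x * point_mass R b y.
have d_sum a b x : \sum_y d a b x y = point_mass R a x.
  by rewrite -mulr_sumr point_mass_sum1 mulr1.
exists (fun x y => g x y + (d z z' x y - d z' z x y)); split.
- by move=> x y; rewrite g_anti /d; ring.
- move=> x y xy; have d_edge a b : e a b -> d a b x y = 0.
    move=> ab; rewrite /d /point_mass; have [xa|] := eqVneq x a; last by rewrite mul0r.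
    by have [yb|] := eqVneq y b; [move: xy; rewrite xa yb ab | rewrite mulr0].
  by rewrite g_edge // (d_edge z z') // (d_edge z' z) ?subrr ?addr0 // e_sym.
- by move=> x; rewrite big_split sumrB g_div !d_sum /=; ring.
Qed.

(* Superpose, with weights [s z], flows from every [z] to a fixed root. *)
Lemma exists_bounded_flow (r : T) : connected_graph e ->
  exists2 M : R, 0 <= M & forall s : T -> R, \sum_x s x = 0 ->
    exists2 g, is_flow g s & forall x y, `|g x y| <= M * l1norm s.
Proof.
move=> e_conn; have [H H_flow] := choice (fun z => path_flow (e_conn z r)).
pose M := \sum_z \sum_x \sum_y `|H z x y|.
have M_ge0 : 0 <= M by do 3 (apply: sumr_ge0 => ? _).
exists M => // s s_sum0; exists (fun x y => \sum_z s z * H z x y); first split.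
- by move=> x y; rewrite -sumrN; apply: eq_bigr => z _; have [-> _ _] := H_flow z; rewrite mulrN.
- by move=> x y xy; rewrite big1 // => z _; have [_ -> // _] := H_flow z; rewrite mulr0.
- move=> x; rewrite exchange_big /=.
  have H_div z : \sum_y H z x y = point_mass R z x - point_mass R r x by case: (H_flow z).
  under eq_bigr => z _ do rewrite -mulr_sumr H_div mulrBr.
  rewrite sumrB -mulr_suml s_sum0 mul0r subr0 -[RHS](sum_ifeq s x).
  by apply: eq_bigr => z _; rewrite /point_mass eq_sym; case: eqP; rewrite ?mulr1 ?mulr0.
- move=> x y; apply: le_trans (ler_norm_sum _ _ _) _.
  rewrite /l1norm mulr_sumr; apply: ler_sum => z _; rewrite normrM mulrC ler_wpM2r //.
  apply: le_trans (@ler_sum_term _ _ (fun y => `|H z x y|) y _) _ => //.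
  apply: le_trans (@ler_sum_term _ _ (fun x => \sum_y `|H z x y|) x _) _.
    by move=> t; apply: sumr_ge0.
  apply: (@ler_sum_term _ _ (fun z => \sum_x \sum_y `|H z x y|) z) => t.
  by do 2 (apply: sumr_ge0 => ? _).
Qed.
End Flow.

Section NearStationary.
Variables (R : realType) (T : finType) (e : rel T).
Hypothesis e_sym : symmetric e.
Hypothesis e_irr : irreflexive e.
Hypothesis deg_gt0 : forall x, (0 < deg e x)%N.

(* The uniform flow [1 / vol] per edge out of [A] carries [stat] restricted to
   [A] onto [stat] restricted to [~: A]; [g] corrects it. *)
Definition flow_plan (A : {set T}) (g : T -> T -> R) x y : R :=
  if (x \in A) && e x y then (vol R e)^-1 + g x y else 0.

Lemma flow_plan_rows (A : {set T}) (g : T -> T -> R) (s : T -> R) x :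
  is_flow e g s -> x \in A ->
  \sum_y flow_plan A g x y = stat R e x + s x.
Proof.
case=> _ g_edge g_div xA; rewrite /flow_plan xA /= -g_div.
rewrite (eq_bigr (fun y => (if e x y then (vol R e)^-1 else 0) + g x y)); last first.
  by move=> y _; case: ifP => // /negbT /g_edge ->; rewrite addr0.
by rewrite big_split /= sum_edge_const /stat mulrC.
Qed.

Lemma flow_plan_cols (A : {set T}) (g : T -> T -> R) (s : T -> R) y :
  bipartition e A -> is_flow e g s -> y \notin A ->
  \sum_x flow_plan A g x y = stat R e y - s y.
Proof.
move=> A_bip [g_anti g_edge g_div] yA.
rewrite (eq_bigr (fun x => (if e y x then (vol R e)^-1 else 0) + g x y)); last first.
  move=> x _; rewrite /flow_plan e_sym; have [yx|yx] := boolP (e y x).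
    by rewrite andbT (A_bip x y) ?yA // e_sym.
  by rewrite andbF add0r g_edge // e_sym.
rewrite big_split /= sum_edge_const /stat mulrC -g_div -sumrN.
by congr (_ + _); apply: eq_bigr => x _; rewrite g_anti.
Qed.

(* The plan keeps [nu] in place on [A] and moves the rest of [mu] across single
   edges. *)
Lemma wasserstein_eq_tv_of_flow (A : {set T}) (mu nu : T -> R) (g : T -> T -> R) :
  bipartition e A -> (forall x, x \notin A -> mu x = 0) -> (forall x, 0 <= nu x) ->
  is_flow e g (fun x => mu x - nu x + stat_on R e (~: A) x - stat_on R e A x) ->
  (forall x y, - (vol R e)^-1 <= g x y) ->
  wasserstein e mu nu = 1 / 2 * \sum_x `|mu x - nu x|.
Proof.
move=> A_bip mu_out nu_ge0 g_flow g_ge.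
have F_ge0 x y : 0 <= flow_plan A g x y.
  by rewrite /flow_plan; case: ifP => // _; have := g_ge x y; lra.
have rowA x : x \in A -> \sum_y flow_plan A g x y = mu x - nu x.
  by move=> xA; rewrite (flow_plan_rows g_flow xA) /stat_on finset.in_setC xA /=; ring.
have rowAc x : x \notin A -> \sum_y flow_plan A g x y = 0.
  by move=> xA; rewrite big1 // => y _; rewrite /flow_plan (negbTE xA).
have colA y : y \in A -> \sum_x flow_plan A g x y = 0.
  move=> yA; rewrite big1 // => x _; rewrite /flow_plan.
  by case: (boolP (e x y)) => [xy|_]; rewrite ?andbF // (A_bip _ _ xy) yA.
have colAc y : y \notin A -> \sum_x flow_plan A g x y = nu y.
  move=> yA; rewrite (flow_plan_cols A_bip g_flow yA).
  by rewrite /stat_on finset.in_setC yA (negbTE yA) mu_out //=; ring.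
have nu_le_mu x : x \in A -> nu x <= mu x.
  by move=> xA; rewrite -subr_ge0 -rowA //; apply: sumr_ge0 => y _.
pose P x y := (if (x == y) && (x \in A) then nu x else 0) + flow_plan A g x y.
have diag_row x :
    \sum_y (if (x == y) && (x \in A) then nu x else 0) = if x \in A then nu x else 0.
  case: (x \in A); last by rewrite big1 // => y _; rewrite andbF.
  by under eq_bigr do rewrite andbT; rewrite (sum_ifeq (fun=> nu x)).
apply: (@wasserstein_edge_plan _ _ _ _ _ P); first split.
- by move=> x y; rewrite /P addr_ge0 //; case: ifP.
- split=> [x|y]; rewrite /P big_split /=.
    rewrite diag_row; have [xA|xA] := boolP (x \in A); first by rewrite rowA //; ring.
    by rewrite rowAc // mu_out // addr0.
  rewrite (eq_bigr (fun x => if x == y then (if y \in A then nu y else 0) else 0)); last first.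
    by move=> x _; case: eqP => [->|].
  rewrite -big_mkcond big_pred1_eq; have [yA|yA] := boolP (y \in A).
    by rewrite colA // addr0.
  by rewrite colAc // add0r.
- by move=> x y /negbTE xy nxy; rewrite /P /flow_plan xy (negbTE nxy) andbF addr0.
- move=> x; rewrite /P eqxx /= /flow_plan e_irr andbF addr0.
  have [xA|xA] := boolP (x \in A); first by rewrite min_r ?nu_le_mu.
  by rewrite mu_out // min_l.
Qed.

Lemma wasserstein_eq_tv_near_stat : connected_graph e -> T ->
  exists2 eta : R, 0 < eta & forall (A : {set T}) (mu nu : T -> R),
  bipartition e A -> (forall x, x \notin A -> mu x = 0) -> (forall x, 0 <= nu x) ->
  \sum_x mu x = 1 -> \sum_x nu x = 1 ->
  l1norm (fun x => mu x - 2 * stat_on R e A x) + l1norm (fun x => nu x - stat R e x) < eta ->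
  wasserstein e mu nu = 1 / 2 * \sum_x `|mu x - nu x|.
Proof.
move=> e_conn x0; have [M M_ge0 flow_M] := exists_bounded_flow R e_sym x0 e_conn.
have vol_gt0 : 0 < vol R e := vol_gt0 R deg_gt0 x0.
have M1_gt0 : 0 < M + 1 by rewrite ltr_wpDl.
(* Small enough that the correcting flow stays below the uniform flow [1 / vol]. *)
exists ((vol R e)^-1 / (M + 1)); first by rewrite divr_gt0 ?invr_gt0.
move=> A mu nu A_bip mu_out nu_ge0 mu_sum1 nu_sum1 near.
pose s x := mu x - nu x + stat_on R e (~: A) x - stat_on R e A x.
have s_sum0 : \sum_x s x = 0.
  rewrite sumrB big_split sumrB /= mu_sum1 nu_sum1 !sum_stat_on //; first lra.
  exact: bipartitionC.
have s_le : l1norm s <=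
    l1norm (fun x => mu x - 2 * stat_on R e A x) + l1norm (fun x => nu x - stat R e x).
  rewrite /l1norm -big_split; apply: ler_sum => x _; rewrite /s /stat_on finset.in_setC.
  have [xA|xA] /= := boolP (x \in A).
    by rewrite (_ : _ - _ = (mu x - 2 * stat R e x) - (nu x - stat R e x)) ?ler_normB //; ring.
  by rewrite mu_out // mulr0 !subr0 sub0r normr0 add0r addrC distrC.
have [g g_flow g_le] := flow_M s s_sum0.
apply: (wasserstein_eq_tv_of_flow A_bip mu_out nu_ge0 g_flow) => x y.
suff : `|g x y| <= (vol R e)^-1 by have := ler_norm (- g x y); rewrite normrN; lra.
apply: le_trans (g_le x y) _; apply: le_trans (ler_wpM2l M_ge0 (ltW (le_lt_trans s_le near))) _.
rewrite mulrA ler_pdivrMr // mulrC; apply: ler_wpM2l; [by rewrite invr_ge0 ltW | lra].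
Qed.

End NearStationary.

Local Open Scope classical_set_scope.

Section Limits.
Variables (R : realType) (T : finType) (e : rel T).
Implicit Types (mu nu : nat -> T -> R).

Lemma merging_wasserstein_cvg0 mu nu :
  (forall k x, 0 <= mu k x) -> (forall k x, 0 <= nu k x) ->
  (forall k, \sum_x mu k x = 1) -> (forall k, \sum_x nu k x = 1) ->
  merging mu nu -> (fun k => wasserstein e (mu k) (nu k)) @ \oo --> 0.
Proof.
move=> mu_ge0 nu_ge0 mu_sum1 nu_sum1 mu_nu; apply/cvgrPdist_lt => eps eps0.
have card1_gt0 : 0 < #|T|%:R + 1 :> R by rewrite ltr_wpDl.
have [N HN] := mu_nu _ (divr_gt0 eps0 card1_gt0).
exists N => // k /= /HN mu_nu_k; rewrite sub0r normrN.
have plan := transport_plan_prod (mu_ge0 k) (nu_ge0 k) (mu_sum1 k) (nu_sum1 k).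
rewrite ger0_norm; last first.
  apply: wasserstein_ge => [|P]; first by eexists; exact: plan.
  move=> /(tv_le_cost e); apply: le_trans.
  by rewrite mulr_ge0 //; apply: sumr_ge0.
apply: le_lt_trans (wasserstein_le_l1norm e (mu_ge0 k) (nu_ge0 k) _) _.
  by rewrite mu_sum1 nu_sum1.
rewrite ltr_pdivlMr // in mu_nu_k; apply: le_lt_trans mu_nu_k.
by rewrite mulrC ler_wpM2l ?l1norm_ge0 // lerDl.
Qed.

Lemma wasserstein_ge1_disjoint (m n : T -> R) :
  (forall x, 0 <= m x) -> (forall x, 0 <= n x) -> \sum_x m x = 1 -> \sum_x n x = 1 ->
  (forall x, m x = 0 \/ n x = 0) -> 1 <= wasserstein e m n.
Proof.
move=> m_ge0 n_ge0 m_sum1 n_sum1 disj.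
apply: wasserstein_ge => [|P /(tv_le_cost e)]; first by eexists; apply: transport_plan_prod.
apply: le_trans; rewrite (eq_bigr (fun x => m x + n x)); last first.
  by move=> x _; case: (disj x) => ->; rewrite ?sub0r ?subr0 ?normrN ger0_norm ?add0r ?addr0.
by rewrite big_split /= m_sum1 n_sum1; lra.
Qed.
End Limits.

Section BipartiteWalks.
Variables (R : realType) (T : finType) (e : rel T).
Hypothesis e_sym : symmetric e.
Hypothesis e_irr : irreflexive e.
Hypothesis deg_gt0 : forall x, (0 < deg e x)%N.
Variables (A : {set T}) (u : T).
Hypothesis A_bip : bipartition e A.
Hypothesis uA : u \in A.

Lemma simple_walks_opposite_wasserstein_ge1 v k : v \notin A ->
  1 <= wasserstein e (walk_dist e u (0 : R) k) (walk_dist e v 0 k).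
Proof.
move=> vA; have vAc : v \in ~: A by rewrite finset.in_setC.
have g01 : 0 <= (0 : R) <= 1 by rewrite lexx ler01.
apply: wasserstein_ge1_disjoint; rewrite ?walk_dist_sum1 //.
- by move=> x; apply: walk_dist_ge0.
- by move=> x; apply: walk_dist_ge0.
move=> x; have [xs|xs] := boolP (x \in side A k).
  right; apply: (simple_walk_out R (bipartitionC A_bip) vAc).
  by move: xs; rewrite /side; case: (odd k); rewrite !finset.in_setC ?negbK.
by left; apply: (simple_walk_out R A_bip uA).
Qed.

Lemma bipartite_wasserstein_eq_tv v (b : R) : connected_graph e ->
  (forall x y, x \in A -> y \in A -> connect (adj2 e) x y) ->
  (forall x y, x \notin A -> y \notin A -> connect (adj2 e) x y) -> 0 < b < 1 ->
  exists N, forall k, (N <= k)%N -> wasserstein e (walk_dist e u 0 k) (walk_dist e v b k) =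
    1 / 2 * \sum_x `|walk_dist e u 0 k x - walk_dist e v b k x|.
Proof.
move=> e_conn A_conn Ac_conn b01.
have [eta eta0 near_tv] := wasserstein_eq_tv_near_stat R e_sym e_irr deg_gt0 e_conn u.
have [N1 mu_near] := simple_walk_merging_bipartite e_sym e_irr deg_gt0 A_bip A_conn Ac_conn uA
  (divr_gt0 eta0 (ltr0Sn _ 1)).
have [N2 nu_near] :=
  lazy_walk_merging e_sym e_irr deg_gt0 v b01 e_conn (divr_gt0 eta0 (ltr0Sn _ 1)).
exists (maxn N1 N2) => k; rewrite geq_max => /andP[/mu_near mu_k /nu_near nu_k].
apply: (near_tv (side A k)); first exact: bipartition_side.
- exact: (simple_walk_out R A_bip uA).
- by move=> x; apply: walk_dist_ge0; case/andP: b01 => /ltW -> /ltW.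
- exact: walk_dist_sum1.
- exact: walk_dist_sum1.
- lra.
Qed.
End BipartiteWalks.

Section Dichotomy.
Variables (R : realType) (T : finType) (e : rel T).
Hypothesis e_sym : symmetric e.
Hypothesis e_irr : irreflexive e.
Hypothesis deg_gt0 : forall x, (0 < deg e x)%N.
Hypothesis e_conn : connected_graph e.

Lemma merging_Wk_cvg0 u v (a b : R) : 0 <= a <= 1 -> 0 <= b <= 1 ->
  merging (walk_dist e u a) (walk_dist e v b) -> Wk e u v a b @ \oo --> 0.
Proof.
move=> a01 b01; apply: merging_wasserstein_cvg0.
- by move=> k x; apply: walk_dist_ge0.
- by move=> k x; apply: walk_dist_ge0.
- exact: walk_dist_sum1.
- exact: walk_dist_sum1.
Qed.

Lemma walks_merging_or_periodic u v (a b : R) : 0 <= a -> a <= b -> b < 1 ->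
  merging (walk_dist e u a) (walk_dist e v b) \/
  a = 0 /\ exists A : {set T}, [/\ u \in A, bipartition e A,
    forall x y, x \in A -> y \in A -> connect (adj2 e) x y,
    forall x y, x \notin A -> y \notin A -> connect (adj2 e) x y &
    b = 0 -> v \notin A].
Proof.
move=> a_ge0 ab b_lt1; have b_ge0 := le_trans a_ge0 ab.
have [a0|a_neq0] := eqVneq a 0; last first.
  have a_gt0 : 0 < a by rewrite lt_def a_neq0.
  left; apply: merging_trans (lazy_walk_merging e_sym e_irr deg_gt0 u _ e_conn) _.
    by rewrite a_gt0 (le_lt_trans ab).
  by apply: lazy_walk_merging => //; rewrite (lt_le_trans a_gt0 ab).
subst a; have [adj2_conn | [A [uA A_bip A_conn Ac_conn]]] :=
  adj2_connected_or_bipartite e_sym deg_gt0 u e_conn.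
  left; apply: merging_trans (walk_merging_stat e_sym e_irr deg_gt0 u _ e_conn adj2_conn) _.
    by rewrite lexx ltr01.
  by apply: walk_merging_stat => //; rewrite b_ge0.
have [/andP[/eqP -> vA]|not_same] := boolP ((b == 0) && (v \in A)).
  left; apply: merging_trans
    (simple_walk_merging_bipartite e_sym e_irr deg_gt0 A_bip A_conn Ac_conn uA) _.
  exact: simple_walk_merging_bipartite.
by right; split=> //; exists A; split=> // b0; move: not_same; rewrite b0 eqxx.
Qed.
End Dichotomy.

Unset Implicit Arguments.
Set Strict Implicit.

Theorem corollary5p3 (R : realType) (T : finType) (e : rel T) (u v : T) (a b : R) :
  simple_graph e -> connected_graph e ->
  0 <= a -> a <= b -> b <= 1 ->
  (Wk e u v a b @ \oo --> (1 / 2 : R)) ->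
  b < 1 ->
  exists N : nat, forall k : nat, (N <= k)%N ->
    Wk e u v a b k =
      1 / 2 * \sum_(w : T) `|walk_dist e u a k w - walk_dist e v b k w|.
Proof.
move=> [e_sym e_irr] e_conn a_ge0 ab b_le1 W_half b_lt1.
have [T1|/existsNP[y /eqP y_neq_u]] := pselect (forall y : T, y = u).
  have W0 : Wk e u v a b = fun=> 0 by apply: funext => k; apply: wasserstein_card1 T1.
  by move: W_half; rewrite W0 => /(norm_cvg_unique (cvg_cst _)); lra.
have deg_gt0 := deg_gt0_connected e_conn y_neq_u.
have [merge|[a0 [A [uA A_bip A_conn Ac_conn b0_vA]]]] :=
  walks_merging_or_periodic e_sym e_irr deg_gt0 e_conn u v a_ge0 ab b_lt1.
  have : (1 / 2 : R) = 0.
    apply: (norm_cvg_unique W_half (merging_Wk_cvg0 e_irr deg_gt0 _ _ merge)).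
      by rewrite a_ge0 (le_trans ab).
    by rewrite (le_trans a_ge0).
  lra.
subst a; have [b0|b_neq0] := eqVneq b 0.
  subst b; have W_ge1 k :=
    simple_walks_opposite_wasserstein_ge1 R e_irr deg_gt0 A_bip uA k (b0_vA erefl).
  have : 1 <= lim (Wk e u v (0 : R) 0 @ \oo).
    by apply: limr_ge; [exact: cvgP W_half | exact: nearW].
  by rewrite (cvg_lim _ W_half) //; lra.
apply: (bipartite_wasserstein_eq_tv e_sym e_irr deg_gt0 A_bip uA) => //.
by rewrite lt_def b_neq0 ab.
Qed.
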